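(* Let $(\Sigma,E)$ be an algebraic theory which is an algebraic presentation of a monad $(M,\eta,\mu)$ on $\mathbf{Set}$. Then $(\Sigma^{\mathrm{s}},E^{\mathrm{s}})$ is an algebraic presentation of the semifree monad $(M^{\mathrm{s}},\eta^{\mathrm{s}},\mu^{\mathrm{s}})$ on $M$.
   Context: An algebraic signature $\Sigma$ is a set of operation symbols, each with an arity $n\in\mathbb{N}$ (written $(\mathsf{op}:n)$). $\mathrm{Var}=\{v_1,v_2,\dots\}$ is a fixed set of variables; an equation is a pair of $\Sigma$-terms over $\mathrm{Var}$; an algebraic theory $(\Sigma,E)$ is a signature with a set $E$ of equations. The free monad $T_{\Sigma,E}$ of $(\Sigma,E)$ sends a set $X$ to the set of $\Sigma$-terms over $X$ modulo the smallest congruence containing all substitution instances of equations of $E$; its unit sends $x$ to its class and its multiplication flattens terms. An algebraic theory $(\Sigma',E')$ is an algebraic presentation of a $\mathbf{Set}$-monad $M$ if $T_{\Sigma',E'}\cong M$ as monads. For a monad $(M,\eta,\mu)$ on a category with finite coproducts, the semifree monad is $M^{\mathrm{s}}=\mathrm{Id}+M$ with unit $\eta^{\mathrm{s}}=\mathrm{inl}$ and multiplication $\mu^{\mathrm{s}}=[\mathrm{id}_{\mathrm{Id}+M},\ \mathrm{inr}\circ\mu\circ M[\eta,\mathrm{id}_M]]$. Given $(\Sigma,E)$, the theory $(\Sigma^{\mathrm{s}},E^{\mathrm{s}})$ has signature $\Sigma^{\mathrm{s}}=\Sigma\uplus\{\mathsf{a}:1\}$ and equations $E^{\mathrm{s}}$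 consisting of: $\mathsf{a}\mathsf{a}v_1=\mathsf{a}v_1$; $\mathsf{a}(\mathsf{op}(v_1,\dots,v_n))=\mathsf{op}(v_1,\dots,v_n)$ and $\mathsf{op}(\mathsf{a}v_1,\dots,\mathsf{a}v_n)=\mathsf{op}(v_1,\dots,v_n)$ for every $(\mathsf{op}:n)\in\Sigma$; and $t(\mathsf{a}v_1,\dots,\mathsf{a}v_n)=s(\mathsf{a}v_1,\dots,\mathsf{a}v_n)$ for every equation $t(v_1,\dots,v_n)=s(v_1,\dots,v_n)$ in $E$. *)

From mathcomp Require Import all_boot.
Set Implicit Arguments. Unset Strict Implicit. Unset Printing Implicit Defensive.

Record signature := Signature { op : Type; arity : op -> nat }.

Inductive term (S : signature) (X : Type) : Type :=
| Var : X -> term S X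
| App : forall o : op S, ('I_(arity o) -> term S X) -> term S X.
Arguments Var {S X} x.
Arguments App {S X} o ts.

Fixpoint subst (S : signature) (X Y : Type) (sigma : X -> term S Y)
  (t : term S X) : term S Y :=
  match t with
  | Var x => sigma x
  | App o ts => App o (fun i => subst sigma (ts i))
  end.

Definition tmap (S : signature) (X Y : Type) (f : X -> Y) (t : term S X) : term S Y :=
  subst (fun x => Var (f x)) t.

Definition tjoin (S : signature) (X : Type) (t : term S (term S X)) : term S X :=
  subst (fun u => u) t.

(* Var = {v_1, v_2, ...} is represented by nat (v_(i+1) is the number i). *)
Record theory := Theory {
  sig : signature;
  eqs : term sig nat -> term sig nat -> Prop
}.
Arguments eqs : clear implicits.

Inductive eqE (T : theory) (X : Type) : term (sig T) X -> term (sig T) X -> Prop :=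
| eqE_ax (l r : term (sig T) nat) (sigma : nat -> term (sig T) X) :
    eqs T l r -> eqE (subst sigma l) (subst sigma r)
| eqE_refl t : eqE t t
| eqE_sym t s : eqE t s -> eqE s t
| eqE_trans t s u : eqE t s -> eqE s u -> eqE t u
| eqE_app (o : op (sig T)) (ts ss : 'I_(arity o) -> term (sig T) X) :
    (forall i, eqE (ts i) (ss i)) -> eqE (App o ts) (App o ss).

Record monad_data := MonadData {
  carrier :> Type -> Type;
  fmap : forall X Y : Type, (X -> Y) -> carrier X -> carrier Y;
  ret : forall X : Type, X -> carrier X;
  mult : forall X : Type, carrier (carrier X) -> carrier X
}.
Arguments fmap m {X Y} _ _.
Arguments ret m {X} _.
Arguments mult m {X} _.

Definition is_monad (M : monad_data) : Prop :=
  (forall X (m : M X), fmap M (fun x => x) m = m) /\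
      (forall X Y Z (f : X -> Y) (g : Y -> Z) (m : M X),
          fmap M (fun x => g (f x)) m = fmap M g (fmap M f m)) /\
      (forall X Y (f : X -> Y) (x : X), fmap M f (ret M x) = ret M (f x)) /\
      (forall X Y (f : X -> Y) (m : M (M X)),
          fmap M f (mult M m) = mult M (fmap M (fmap M f) m)) /\
      (forall X (m : M X), mult M (ret M m) = m) /\
      (forall X (m : M X), mult M (fmap M (@ret M X) m) = m) /\
      (forall X (m : M (M (M X))),
          mult M (mult M m) = mult M (fmap M (@mult M X) m)).

(* Algebraic presentation: T_{Sigma,E} is isomorphic to M as monads.   *)
(* T_{Sigma,E} X is the quotient of term X by eqE; an isomorphism out  *)
(* of the quotient is encoded by a family phi_X : term X -> M X that   *)
(* respects eqE (well defined on classes), reflects it (injective on   *)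
(* classes), is surjective, natural, and commutes with the units and   *)
(* multiplications.                                     *)

Definition presents (T : theory) (M : monad_data) : Prop :=
  exists phi : forall X : Type, term (sig T) X -> M X,
    (forall X (t s : term (sig T) X), eqE t s -> phi X t = phi X s) /\
        (forall X (t s : term (sig T) X), phi X t = phi X s -> eqE t s) /\
        (forall X (m : M X), exists t : term (sig T) X, phi X t = m) /\
        (forall X Y (f : X -> Y) (t : term (sig T) X),
            phi Y (tmap f t) = fmap M f (phi X t)) /\
        (forall X (x : X), phi X (Var x) = ret M x) /\
        (forall X (t : term (sig T) (term (sig T) X)),
            phi X (tjoin t) = mult M (fmap M (phi X) (phi (term (sig T) X) t))).

Definition semifree (M : monad_data) : monad_data :=
  {| carrier := fun X => (X + M X)%type;
     fmap := fun X Y (f : X -> Y) (z : X + M X) =>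
               match z with
               | inl x => inl (f x)
               | inr m => inr (fmap M f m)
               end;
     ret := fun X (x : X) => inl x;
     mult := fun X (z : ((X + M X) + M (X + M X))%type) =>
               match z with
               | inl y => y
               | inr m => inr (mult M (fmap M
                             (fun y : (X + M X)%type => match y with
                                                 | inl x => ret M x
                                                 | inr m' => m'
                                                 end) m))
               end |}.

(* Sigma^s = Sigma + {a : 1}; None is the new unary symbol a. *)
Definition sig_s (S : signature) : signature :=
  {| op := option (op S);
     arity := fun o => match o with None => 1%N | Some o' => arity o' end |}.

Fixpoint emb (S : signature) (X : Type) (t : term S X) : term (sig_s S) X :=
  match t with
  | Var x => Var x
  | App o ts => @App (sig_s S) X (Some o) (fun i => emb (ts i))
  end.

Definition aop (S : signature) (X : Type) (t : term (sig_s S) X) : term (sig_s S) X :=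
  @App (sig_s S) X None (fun _ => t).

Definition opv (S : signature) (o : op S) : term (sig_s S) nat :=
  @App (sig_s S) nat (Some o) (fun i => Var (nat_of_ord i)).
Definition opav (S : signature) (o : op S) : term (sig_s S) nat :=
  @App (sig_s S) nat (Some o) (fun i => aop (Var (nat_of_ord i))).

Inductive eqs_s (T : theory) : term (sig_s (sig T)) nat -> term (sig_s (sig T)) nat -> Prop :=
| es_aa : eqs_s (aop (aop (Var 0%N))) (aop (Var 0%N))
| es_aop (o : op (sig T)) : eqs_s (aop (opv o)) (opv o)
| es_opa (o : op (sig T)) : eqs_s (opav o) (opv o)
| es_E (l r : term (sig T) nat) :
    eqs T l r ->
    eqs_s (subst (fun v => aop (Var v)) (emb l))
            (subst (fun v => aop (Var v)) (emb r)).

Definition theory_s (T : theory) : theory :=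
  {| sig := sig_s (sig T); eqs := @eqs_s T |}.

From mathcomp Require Import all_boot.
From Stdlib Require Import FunctionalExtensionality.

Set Implicit Arguments. Unset Strict Implicit. Unset Printing Implicit Defensive.

(* Modulo E^s, a Sigma^s-term that is not a variable equals its erasure (the
   Sigma-term obtained by deleting every a) with each variable guarded by a:
   the axioms of E^s push every a down to the variables, where the a's merge.
   As E^s contains E with guarded variables, two such terms are E^s-equal iff
   their erasures are E-equal.  Hence T_{Sigma^s,E^s} X = X + T_{Sigma,E} X, by
   sending a variable to inl and any other term to inr of the class of its
   erasure; this is a monad morphism because erasure commutes with substitution. *)

Lemma subst_comp (S : signature) (X Y Z : Type)
    (f : X -> term S Y) (g : Y -> term S Z) (t : term S X) :
  subst g (subst f t) = subst (fun x => subst g (f x)) t.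
Proof.
by elim: t => [x|o ts IH] //=; congr App; apply: functional_extensionality.
Qed.

Section Terms.

Variable S : signature.

Lemma emb_subst (X Y : Type) (sigma : X -> term S Y) (t : term S X) :
  emb (subst sigma t) = subst (fun x => emb (sigma x)) (emb t).
Proof.
by elim: t => [x|o ts IH] //=; congr App; apply: functional_extensionality.
Qed.

Fixpoint erase (X : Type) (t : term (sig_s S) X) : term S X :=
  match t with
  | Var x => Var x
  | App o ts =>
      match o return ('I_(@arity (sig_s S) o) -> term (sig_s S) X) -> term S X with
      | None => fun ts => erase (ts ord0)
      | Some o' => fun ts => App o' (fun i => erase (ts i))
      end ts
  end.

Lemma erase_emb (X : Type) (t : term S X) : erase (emb t) = t.
Proof.
by elim: t => [x|o ts IH] //=; congr App; apply: functional_extensionality.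
Qed.

Lemma erase_subst (X Y : Type) (sigma : X -> term (sig_s S) Y) (t : term (sig_s S) X) :
  erase (subst sigma t) = subst (fun x => erase (sigma x)) (erase t).
Proof.
elim: t => [x|[o|] ts IH] //=.
by congr App; apply: functional_extensionality.
Qed.

Lemma erase_tmap (X Y : Type) (f : X -> Y) (t : term (sig_s S) X) :
  erase (tmap f t) = tmap f (erase t).
Proof. exact: erase_subst. Qed.

Lemma erase_tjoin (X : Type) (t : term (sig_s S) (term (sig_s S) X)) :
  erase (tjoin t) = tjoin (tmap (@erase X) (erase t)).
Proof. by rewrite /tjoin /tmap erase_subst subst_comp. Qed.

Definition aguard (X : Type) (x : X) : term (sig_s S) X := aop (Var x).

(* E^s contains aemb l = aemb r for every equation l = r of E. *)
Definition aemb (X : Type) (u : term S X) : term (sig_s S) X :=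
  subst (@aguard X) (emb u).

Lemma aemb_subst (X Y : Type) (sigma : X -> term S Y) (u : term S X) :
  aemb (subst sigma u) = subst (fun x => aemb (sigma x)) (emb u).
Proof. by rewrite /aemb emb_subst subst_comp. Qed.

Lemma subst_aemb (X Y : Type) (sigma : X -> term (sig_s S) Y) (u : term S X) :
  subst sigma (aemb u) = subst (fun x => aop (sigma x)) (emb u).
Proof. by rewrite /aemb subst_comp. Qed.

Lemma erase_subst_aemb (X Y : Type) (sigma : X -> term (sig_s S) Y) (u : term S X) :
  erase (subst sigma (aemb u)) = subst (fun x => erase (sigma x)) u.
Proof. by rewrite subst_aemb erase_subst erase_emb. Qed.

Lemma subst_aemb_neq_Var (X Y : Type)
    (sigma : X -> term (sig_s S) Y) (u : term S X) (y : Y) :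
  subst sigma (aemb u) <> Var y.
Proof. by rewrite subst_aemb; case: u. Qed.

End Terms.

Lemma eqE_subst (T : theory) (X Y : Type) (f g : X -> term (sig T) Y) (t : term (sig T) X) :
  (forall x, eqE (f x) (g x)) -> eqE (subst f t) (subst g t).
Proof.
move=> efg; elim: t => [x|o ts IH] /=; first exact: efg.
by apply: eqE_app.
Qed.

(* Extends a family indexed by 'I_n to nat (by the junk value d), so that an
   axiom in the variables v_0, ..., v_(n-1) can be instantiated by the family. *)
Definition ord_subst (A : Type) (n : nat) (d : A) (f : 'I_n -> A) (k : nat) : A :=
  if insub k is Some i then f i else d.

Lemma ord_substE (A : Type) (n : nat) (d : A) (f : 'I_n -> A) (i : 'I_n) :
  ord_subst d f i = f i.
Proof. by rewrite /ord_subst valK. Qed.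

Lemma ord_substK (A : Type) (n : nat) (d : A) (f : 'I_n -> A) :
  (fun i : 'I_n => ord_subst d f i) = f.
Proof. by apply: functional_extensionality => i; rewrite ord_substE. Qed.

Section DerivedEquations.

Variable T : theory.
Local Notation S := (sig T).
Local Notation term_s := (term (sig_s S)).
Local Notation eqEs := (@eqE (theory_s T) _).

Lemma eqE_aa (X : Type) (t : term_s X) : eqEs (aop (aop t)) (aop t).
Proof. exact: (@eqE_ax (theory_s T) X _ _ (fun=> t) (es_aa T)). Qed.

Lemma eqE_a_op (X : Type) (o : op S) (ts : 'I_(arity o) -> term_s X) :
  eqEs (aop (@App (sig_s S) X (Some o) ts)) (@App (sig_s S) X (Some o) ts).
Proof.
have := @eqE_ax (theory_s T) X _ _ (ord_subst (@App (sig_s S) X (Some o) ts) ts) (es_aop o).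
by rewrite /= ord_substK.
Qed.

Lemma eqE_op_a (X : Type) (o : op S) (ts : 'I_(arity o) -> term_s X) :
  eqEs (@App (sig_s S) X (Some o) (fun i => aop (ts i))) (@App (sig_s S) X (Some o) ts).
Proof.
have := @eqE_ax (theory_s T) X _ _ (ord_subst (@App (sig_s S) X (Some o) ts) ts) (es_opa o).
rewrite /= ord_substK; apply: eqE_trans.
by apply: eqE_app => i; rewrite ord_substE; apply: eqE_refl.
Qed.

Lemma eqE_App_None (X : Type) (ts : 'I_1 -> term_s X) :
  eqEs (@App (sig_s S) X None ts) (aop (ts ord0)).
Proof. by apply: eqE_app => i; rewrite (ord1 i); apply: eqE_refl. Qed.

Lemma eqE_a_App (X : Type) o (ts : 'I_(@arity (sig_s S) o) -> term_s X) :
  eqEs (aop (App o ts)) (App o ts).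
Proof.
case: o ts => [o|] ts; first exact: eqE_a_op.
apply: eqE_trans (eqE_sym (eqE_App_None ts)).
apply: eqE_trans (eqE_aa (ts ord0)).
by apply: eqE_app => _; apply: eqE_App_None.
Qed.

Lemma eqE_a_aemb (X : Type) (u : term S X) : eqEs (aop (aemb u)) (aemb u).
Proof. by case: u => [x|o us]; [apply: eqE_aa | apply: eqE_a_op]. Qed.

Lemma eqE_aemb (X : Type) (u v : term S X) : eqE u v -> eqEs (aemb u) (aemb v).
Proof.
elim=> {u v} [l r sigma lr|t|t s _|t s u _ ets _|o ts ss _ IH].
- pose tau x := aemb (sigma x).
  have unguard w : eqEs (subst tau (aemb w)) (aemb (subst sigma w)).
    by rewrite subst_aemb aemb_subst; apply: eqE_subst => x; apply: eqE_a_aemb.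
  apply: eqE_trans (unguard r); apply: eqE_trans (eqE_sym (unguard l)) _.
  exact: (@eqE_ax (theory_s T) X _ _ tau (es_E lr)).
- exact: eqE_refl.
- exact: eqE_sym.
- exact: eqE_trans.
- exact: (@eqE_app (theory_s T) X (Some o)).
Qed.

Lemma eqE_a_aemb_erase (X : Type) (t : term_s X) : eqEs (aop t) (aemb (erase t)).
Proof.
elim: t => [x|[o|] ts IH]; first exact: eqE_refl.
- apply: eqE_trans (eqE_a_op ts) _.
  apply: eqE_trans (eqE_sym (eqE_op_a ts)) _.
  exact: eqE_app.
- apply: eqE_trans _ (IH ord0).
  apply: eqE_trans (eqE_a_App ts) _.
  exact: eqE_App_None.
Qed.

Lemma eqE_App_aemb_erase (X : Type) o (ts : 'I_(@arity (sig_s S) o) -> term_s X) :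
  eqEs (App o ts) (aemb (erase (App o ts))).
Proof. exact: eqE_trans (eqE_sym (eqE_a_App _)) (eqE_a_aemb_erase _). Qed.

End DerivedEquations.

Section SemifreePresentation.

Variables (T : theory) (M : monad_data).
Local Notation S := (sig T).
Local Notation term_s := (term (sig_s S)).
Local Notation Ms := (semifree M).

Hypothesis fmap_comp : forall X Y Z (f : X -> Y) (g : Y -> Z) (m : M X),
  fmap M (fun x => g (f x)) m = fmap M g (fmap M f m).

Variable phi : forall X : Type, term S X -> M X.
Hypothesis phi_eqE : forall X (t s : term S X), eqE t s -> phi t = phi s.
Hypothesis phi_inj : forall X (t s : term S X), phi t = phi s -> eqE t s.
Hypothesis phi_surj : forall X (m : M X), exists t : term S X, phi t = m.
Hypothesis phi_tmap : forall X Y (f : X -> Y) (t : term S X), phi (tmap f t) = fmap M f (phi t).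
Hypothesis phi_Var : forall X (x : X), phi (Var x) = ret M x.
Hypothesis phi_tjoin : forall X (t : term S (term S X)),
  phi (tjoin t) = mult M (fmap M (@phi X) (phi t)).

Definition phi_s (X : Type) (t : term_s X) : Ms X :=
  if t is Var x then inl x else inr (phi (erase t)).

Definition collapse (X : Type) (z : Ms X) : M X :=
  match z with inl x => ret M x | inr m => m end.

Lemma phi_s_nonVar (X : Type) (t : term_s X) :
  (forall x, t <> Var x) -> phi_s t = inr (phi (erase t)).
Proof. by case: t => [x /(_ x)|]. Qed.

Lemma collapse_phi_s (X : Type) (t : term_s X) : collapse (phi_s t) = phi (erase t).
Proof. by case: t => //= x; rewrite phi_Var. Qed.

Lemma phi_App_cong (X : Type) (o : op S) (us vs : 'I_(arity o) -> term S X) :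
  (forall i, phi (us i) = phi (vs i)) -> phi (App o us) = phi (App o vs).
Proof. by move=> uv; apply/phi_eqE/eqE_app => i; apply/phi_inj. Qed.

Lemma phi_s_eqE (X : Type) (t s : term_s X) : @eqE (theory_s T) X t s -> phi_s t = phi_s s.
Proof.
elim=> {t s} [l r sigma|t|t s _ ->|t s u _ -> _ ->|[o|] ts ss _ IH] //.
- case=> [| | |l0 r0 lr] //.
  rewrite -[subst _ (emb l0)]/(aemb l0) -[subst _ (emb r0)]/(aemb r0).
  rewrite !phi_s_nonVar; try exact: subst_aemb_neq_Var.
  by rewrite !erase_subst_aemb; congr inr; apply/phi_eqE/eqE_ax.
- by congr inr; apply: phi_App_cong => i; rewrite -!collapse_phi_s IH.
- by congr inr => /=; rewrite -!collapse_phi_s IH.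
Qed.

Lemma phi_s_inj (X : Type) (t s : term_s X) : phi_s t = phi_s s -> @eqE (theory_s T) X t s.
Proof.
case: t s => [x|o ts] [y|o' ss] //= => [[->]|[/phi_inj ets]]; first exact: eqE_refl.
apply: eqE_trans (eqE_App_aemb_erase _) _.
apply: eqE_trans (eqE_sym (eqE_App_aemb_erase _)).
exact: eqE_aemb.
Qed.

Lemma phi_s_surj (X : Type) (z : Ms X) : exists t : term_s X, phi_s t = z.
Proof.
case: z => [x|m]; first by exists (Var x).
have [t <-] := phi_surj m.
by exists (aop (emb t)); rewrite /= erase_emb.
Qed.

Lemma phi_s_tmap (X Y : Type) (f : X -> Y) (t : term_s X) :
  phi_s (tmap f t) = fmap Ms f (phi_s t).
Proof.
by case: t => [//|o ts]; rewrite !phi_s_nonVar // erase_tmap phi_tmap.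
Qed.

Lemma phi_s_tjoin (X : Type) (t : term_s (term_s X)) :
  phi_s (tjoin t) = mult Ms (fmap Ms (@phi_s X) (phi_s t)).
Proof.
case: t => [//|o ts].
rewrite !phi_s_nonVar // erase_tjoin phi_tjoin phi_tmap /= -!fmap_comp.
congr (inr (mult M (fmap M _ _))).
by apply: functional_extensionality => t; rewrite -collapse_phi_s.
Qed.

End SemifreePresentation.

Theorem corollary1 (T : theory) (M : monad_data) :
  is_monad M -> presents T M -> presents (theory_s T) (semifree M).
Proof.
move=> [_ [fmap_comp _]] [phi [phi_eqE [phi_inj [phi_surj [phi_tmap [phi_Var phi_tjoin]]]]]].
exists (phi_s phi); do 5?split.
- exact: phi_s_eqE phi_eqE phi_inj phi_Var.
- exact: phi_s_inj phi_inj.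
- exact: phi_s_surj phi_surj.
- exact: phi_s_tmap phi_tmap.
- by [].
- exact (phi_s_tjoin fmap_comp phi_tmap phi_Var phi_tjoin).
Qed.
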